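(* Let $\mathbb{k}$ be a field of characteristic $0$ containing a primitive $n$-th root of unity $\omega$, let $H=T_{n^2}(\omega)$ be the Taft Hopf algebra and $A=A_n(\omega)=\mathbb{k}[z]/(z^n-\omega)=\mathbb{k}[u]$, with $u$ the image of $z$. Equip $A$ with the left $H$-module algebra structure determined by $g\cdot u=\omega u$, $x\cdot u=1$, and the left $H$-comodule algebra structure $\rho:A\to H\otimes A$ determined by $\rho(u)=\sum_{i=0}^{n-1}a_i\,x^ig^{-(i+1)}\otimes u^{i+1}$ with $a_i=(\omega-1)^i\omega^{i(i+1)/2}$. Then, for any $n$, $A$ is commutative in the braided category ${}^H_H\mathcal{YD}$, i.e. for all $a,b\in A$, $$ab=\sum (a_{-1}\cdot b)\,a_0,$$ where $\rho(a)=\sum a_{-1}\otimes a_0$.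
   Context: The Taft Hopf algebra is $H=T_{n^2}(\omega)=\mathbb{k}\langle x,g\mid x^n=0,\ g^n=1,\ xg=\omega gx\rangle$ with $\Delta(g)=g\otimes g$, $\Delta(x)=x\otimes 1+g\otimes x$, $\epsilon(g)=1$, $\epsilon(x)=0$. ${}^H_H\mathcal{YD}$ is the category of left-left Yetter–Drinfeld modules over $H$, braided by $\tau(m\otimes n)=\sum(m_{-1}\cdot n)\otimes m_0$; an algebra $A$ in this category is commutative in it if $m_A=m_A\circ\tau$. Module algebra means $h\cdot(ab)=\sum(h_1\cdot a)(h_2\cdot b)$, $h\cdot1=\epsilon(h)1$; comodule algebra means $\rho$ is an algebra map with $(\mathrm{id}\otimes\rho)\rho=(\Delta\otimes\mathrm{id})\rho$. *)

From HB Require Import structures.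
From mathcomp Require Import all_boot all_order all_algebra.
Set Implicit Arguments. Unset Strict Implicit. Unset Printing Implicit Defensive.
Import Order.TTheory GRing.Theory Num.Theory.
Local Open Scope ring_scope.

Section Taft.
Variables (k : fieldType) (n : nat) (w : k).

(* ---- H = T_{n^2}(w): element h : 'M[k]_n, h i j = coefficient of g^i x^j
   in the basis {g^i x^j | 0 <= i,j < n}. *)

(* basis element g^i x^j (nat exponents): g^i = g^(i mod n) as g^n = 1,
   and x^j = 0 for j >= n as x^n = 0. *)
Definition hb (i j : nat) : 'M[k]_n :=
  \matrix_(a, b) (((a == (i %% n)%N :> nat) && (b == j :> nat))%:R).

(* multiplication, from x^b g^c = w^(bc) g^c x^b (x g = w g x), g^n = 1, x^n = 0 *)
Definition hmul (h h' : 'M[k]_n) : 'M[k]_n :=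
  \matrix_(i, j) \sum_(a < n) \sum_(b < n) \sum_(c < n) \sum_(d < n)
     (if (((a + c) %% n)%N == i :> nat) && ((b + d)%N == j :> nat)
      then h a b * h' c d * w ^+ (b * c)%N else 0).

Definition hone : 'M[k]_n := hb 0 0.
Definition hg : 'M[k]_n := hb 1 0.
Definition hginv : 'M[k]_n := hb n.-1 0.
Definition hx : 'M[k]_n := hb 0 1.
Definition hpow (h : 'M[k]_n) (m : nat) : 'M[k]_n := iter m (hmul h) hone.

(* ---- A = k[u], u^n = w: element a : 'rV[k]_n, a 0 l = coefficient of u^l. *)
Definition upow (l : nat) : 'rV[k]_n :=
  \row_m (if m == (l %% n)%N :> nat then w ^+ (l %/ n)%N else 0).
Definition Aone : 'rV[k]_n := upow 0.
Definition Amul (a b : 'rV[k]_n) : 'rV[k]_n :=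
  \sum_(p < n) \sum_(q < n) (a 0 p * b 0 q) *: upow (p + q)%N.

(* ---- module algebra structure determined by g.u = w u, x.u = 1:
   values on the basis u^l obtained from u^(l+1) = u * u^l via
   g.(ab) = (g.a)(g.b) and x.(ab) = (x.a) b + (g.a)(x.b). *)
Fixpoint g_on_upow (l : nat) : 'rV[k]_n :=
  if l is l'.+1 then Amul (w *: upow 1) (g_on_upow l') else Aone.
Fixpoint x_on_upow (l : nat) : 'rV[k]_n :=
  if l is l'.+1 then Amul Aone (upow l') + Amul (w *: upow 1) (x_on_upow l')
  else 0.
Definition g_act (b : 'rV[k]_n) : 'rV[k]_n := \sum_(l < n) b 0 l *: g_on_upow l.
Definition x_act (b : 'rV[k]_n) : 'rV[k]_n := \sum_(l < n) b 0 l *: x_on_upow l.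
Definition act (h : 'M[k]_n) (b : 'rV[k]_n) : 'rV[k]_n :=
  \sum_(i < n) \sum_(j < n) h i j *: iter i g_act (iter j x_act b).

(* ---- H (x) A: T : {ffun 'I_n -> 'M[k]_n}, T = sum_l (T l) (x) u^l. *)
Definition tens (h : 'M[k]_n) (l : nat) : {ffun 'I_n -> 'M[k]_n} :=
  [ffun m : 'I_n => (if m == (l %% n)%N :> nat then w ^+ (l %/ n)%N else 0) *: h].
Definition HAone := tens hone 0.
Definition HAmul (T T' : {ffun 'I_n -> 'M[k]_n}) : {ffun 'I_n -> 'M[k]_n} :=
  \sum_(p < n) \sum_(q < n) tens (hmul (T p) (T' q)) (p + q)%N.

Definition coef_a (i : nat) : k := (w - 1) ^+ i * w ^+ ((i * i.+1) %/ 2)%N.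
Definition rho_u : {ffun 'I_n -> 'M[k]_n} :=
  \sum_(i < n) tens (coef_a i *: hmul (hpow hx i) (hpow hginv i.+1)) i.+1.
Definition rho_upow (l : nat) : {ffun 'I_n -> 'M[k]_n} :=
  iter l (fun T => HAmul T rho_u) HAone.
Definition rho (a : 'rV[k]_n) : {ffun 'I_n -> 'M[k]_n} :=
  \sum_(l < n) a 0 l *: rho_upow l.

(* ---- braided commutativity in the YD category:  m = m o tau, i.e.
   a b = sum (a_{-1} . b) a_0 with rho(a) = sum_l (rho a l) (x) u^l. *)
Definition YD_commutative : Prop :=
  forall a b : 'rV[k]_n,
    Amul a b = \sum_(l < n) Amul (act (rho a l) b) (upow l).

End Taft.

From HB Require Import structures.
From mathcomp Require Import all_boot all_order all_algebra.
From mathcomp Require Import zify ring.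
Import GRing.Theory.
Local Open Scope ring_scope.
Set Implicit Arguments. Unset Strict Implicit. Unset Printing Implicit Defensive.

(** Both sides of [a b = sum (a_{-1} . b) a_0] are linear in [a] and [b], so it
    suffices to take [a = u^p] and [b = u^m]. The action of [H] on [A] is a
    module structure: on the basis [g^i x^j] this amounts to [g^n = 1],
    [x^n = 0] and [x g = w g x] acting on [A], where [g u^m = w^m u^m] and
    [x u^m = (m)_w u^(m-1)]. Since [rho] is multiplicative, induction on [p]
    reduces everything to [p = 1], where the right-hand side is
    [sum_i a_i w^(-m(i+1)) (m)_w (m-1)_w ... (m-i+1)_w u^(m+1)]; because
    [(w - 1) (j)_w = w^j - 1] this coefficient sum telescopes to [1]. *)

Section LinearFun.
Variables (R : pzRingType) (V W : lmodType R) (f : V -> W) (f_lin : linear f).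

Let f_linear : {linear V -> W} := HB.pack f (GRing.isLinear.Build R V W *:%R f f_lin).

Lemma linear_fun0 : f 0 = 0.
Proof. exact: (linear0 f_linear). Qed.

Lemma linear_funZ a x : f (a *: x) = a *: f x.
Proof. exact: (scalable_linear f_lin). Qed.

Lemma linear_fun_sum I r (P : pred I) (G : I -> V) :
  f (\sum_(i <- r | P i) G i) = \sum_(i <- r | P i) f (G i).
Proof. exact: (linear_sum f_linear). Qed.

End LinearFun.

Section LinearClosure.
Variables (R : pzRingType) (V W X : lmodType R).

Lemma linear_comp (f : W -> X) (g : V -> W) :
  linear f -> linear g -> linear (fun x => f (g x)).
Proof. by move=> f_lin g_lin a x y; rewrite g_lin f_lin. Qed.

Lemma linear_iter (f : V -> V) m : linear f -> linear (iter m f).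
Proof. by move=> f_lin; elim: m => [|m IH] a x y //=; rewrite IH f_lin. Qed.

Lemma linear_sum_fun (I : finType) (f : I -> V -> W) :
  (forall i, linear (f i)) -> linear (fun x => \sum_i f i x).
Proof.
move=> f_lin a x y; rewrite scaler_sumr -big_split; apply: eq_bigr => i _.
exact: f_lin.
Qed.

End LinearClosure.

Lemma linear_scale_fun (R : comPzRingType) (V W : lmodType R) (f : V -> W) c :
  linear f -> linear (fun x => c *: f x).
Proof. by move=> f_lin a x y; rewrite f_lin scalerDr !scalerA mulrC. Qed.

Section YetterDrinfeldCommutativity.
Variables (k : fieldType) (n : nat) (w : k).
Hypotheses (n_gt0 : (0 < n)%N) (w_order : w ^+ n = 1).

Local Notation U := (upow n w).
Local Notation rV := 'rV[k]_n.

Lemma sum_upow_coord (V : lmodType k) (Phi : nat -> V) m : (m < n)%N ->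
  \sum_(l < n) U m 0 l *: Phi l = Phi m.
Proof.
move=> m_lt; rewrite (eq_bigr (fun l : 'I_n => if l == m :> nat then Phi l else 0)).
  by rewrite -big_mkcond big_ord1_eq m_lt.
move=> l _; rewrite mxE modn_small // divn_small // expr0.
by case: eqP; rewrite ?scale1r ?scale0r.
Qed.

Lemma row_upow_decomp (b : rV) : b = \sum_(l < n) b 0 l *: U l.
Proof.
apply/rowP => m; rewrite summxE (bigD1 m) //= big1 ?addr0.
  by rewrite !mxE modn_small // divn_small // eqxx expr0 mulr1.
move=> l l_ne; rewrite !mxE modn_small // ifN ?mulr0 //.
by apply: contra l_ne => /eqP l_eq; apply/eqP/val_inj.
Qed.

Lemma linear_coord (V : lmodType k) (Phi : 'I_n -> V) :
  linear (fun a : rV => \sum_(l < n) a 0 l *: Phi l).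
Proof.
move=> c a b; rewrite scaler_sumr -big_split; apply: eq_bigr => l _ /=.
by rewrite !mxE scalerDl scalerA.
Qed.

Lemma linear_upow_ext (V : lmodType k) (F G : rV -> V) : linear F -> linear G ->
  (forall m, (m < n)%N -> F (U m) = G (U m)) -> F =1 G.
Proof.
move=> F_lin G_lin FG b; rewrite (row_upow_decomp b).
rewrite (linear_fun_sum F_lin) (linear_fun_sum G_lin); apply: eq_bigr => l _.
by rewrite (linear_funZ F_lin) (linear_funZ G_lin) FG.
Qed.

Lemma upow_wrap l j : w ^+ j *: U l = U (l + j * n).
Proof.
apply/rowP => m; rewrite !mxE addnC modnMDl divnMDl // exprD.
by case: eqP; rewrite ?mulr0.
Qed.

Lemma Amul_coordl (a b : rV) :
  Amul w a b = \sum_(p < n) a 0 p *: \sum_(q < n) b 0 q *: U (p + q).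
Proof.
apply: eq_bigr => p _; rewrite scaler_sumr.
by apply: eq_bigr => q _; rewrite scalerA.
Qed.

Lemma Amul_coordr (a b : rV) :
  Amul w a b = \sum_(q < n) b 0 q *: \sum_(p < n) a 0 p *: U (p + q).
Proof.
rewrite /Amul exchange_big; apply: eq_bigr => q _; rewrite scaler_sumr.
by apply: eq_bigr => p _; rewrite scalerA mulrC.
Qed.

Lemma AmulC (a b : rV) : Amul w a b = Amul w b a.
Proof.
rewrite Amul_coordl Amul_coordr.
by do 2 (apply: eq_bigr => ? _; congr (_ *: _)); rewrite addnC.
Qed.

Lemma linear_Amul (a : rV) : linear (Amul w a).
Proof. by move=> c b b'; rewrite !Amul_coordr; apply: linear_coord. Qed.

Lemma linear_Amul_l (b : rV) : linear (Amul w ^~ b).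
Proof. by move=> c a a'; rewrite !(AmulC _ b); apply: linear_Amul. Qed.

Lemma upow_mod p : U p = w ^+ (p %/ n) *: U (p %% n).
Proof. by rewrite upow_wrap addnC -divn_eq. Qed.

Lemma upowM p q : Amul w (U p) (U q) = U (p + q).
Proof.
rewrite (upow_mod p) (upow_mod q) (linear_funZ (linear_Amul _)).
rewrite (linear_funZ (linear_Amul_l _)) Amul_coordl.
rewrite (sum_upow_coord (fun p' => \sum_(q' < n) U (q %% n) 0 q' *: U (p' + q'))) ?ltn_pmod //.
rewrite (sum_upow_coord (fun q' => U (p %% n + q'))) ?ltn_pmod //.
rewrite !scalerA -!exprD upow_wrap; congr U.
by rewrite {3}(divn_eq p n) {3}(divn_eq q n); ring.
Qed.

Lemma AmulA (a b c : rV) : Amul w (Amul w a b) c = Amul w a (Amul w b c).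
Proof.
move: c; apply: linear_upow_ext => [||r r_lt].
- exact: linear_Amul.
- exact: linear_comp (linear_Amul a) (linear_Amul b).
move: b; apply: linear_upow_ext => [||q q_lt].
- exact: linear_comp (linear_Amul_l (U r)) (linear_Amul a).
- exact: linear_comp (linear_Amul a) (linear_Amul_l (U r)).
rewrite upowM; move: a; apply: linear_upow_ext => [||p p_lt].
- exact: linear_comp (linear_Amul_l (U r)) (linear_Amul_l (U q)).
- exact: linear_Amul_l.
by rewrite !upowM addnA.
Qed.

Definition qint (m : nat) : k := \sum_(t < m) w ^+ t.

Definition qfall (m j : nat) : k := \prod_(t < j) qint (m - t).

Lemma qintS m : qint m.+1 = 1 + w * qint m.
Proof.
rewrite /qint big_ord_recl expr0 mulr_sumr.
by congr (_ + _); apply: eq_bigr => t _; rewrite exprS.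
Qed.

Lemma qfall_eq0 m j : (m < j)%N -> qfall m j = 0.
Proof.
by move=> m_lt; rewrite /qfall (bigD1 (Ordinal m_lt)) //= subnn /qint big_ord0 mul0r.
Qed.

Lemma g_on_upowE l : g_on_upow n w l = w ^+ l *: U l.
Proof.
elim: l => [|l IH] /=; first by rewrite scale1r.
rewrite IH (linear_funZ (linear_Amul _)) (linear_funZ (linear_Amul_l _)) upowM.
by rewrite scalerA -exprSr add1n.
Qed.

Lemma x_on_upowE l : x_on_upow n w l = qint l *: U l.-1.
Proof.
elim: l => [|l IH] /=; first by rewrite /qint big_ord0 scale0r.
rewrite IH /Aone upowM add0n (linear_funZ (linear_Amul _)) (linear_funZ (linear_Amul_l _)).
rewrite upowM scalerA; case: l IH => [|l] _ /=.
  by rewrite /qint big_ord0 mul0r scale0r addr0 big_ord1 expr0 scale1r.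
by rewrite add1n (qintS l.+1) scalerDl scale1r mulrC.
Qed.

Lemma linear_g_act : linear (g_act w : rV -> rV).
Proof. exact: linear_coord. Qed.

Lemma linear_x_act : linear (x_act w : rV -> rV).
Proof. exact: linear_coord. Qed.

Lemma g_act_upow m : (m < n)%N -> g_act w (U m) = w ^+ m *: U m.
Proof. by move=> m_lt; rewrite /g_act sum_upow_coord // g_on_upowE. Qed.

Lemma x_act_upow m : (m < n)%N -> x_act w (U m) = qint m *: U m.-1.
Proof. by move=> m_lt; rewrite /x_act sum_upow_coord // x_on_upowE. Qed.

Lemma iter_g_act_upow i m : (m < n)%N -> iter i (g_act w) (U m) = (w ^+ m) ^+ i *: U m.
Proof.
move=> m_lt; elim: i => [|i IH] /=; first by rewrite scale1r.
by rewrite IH (linear_funZ linear_g_act) g_act_upow // scalerA exprSr.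
Qed.

Lemma iter_x_act_upow j m : (m < n)%N -> iter j (x_act w) (U m) = qfall m j *: U (m - j).
Proof.
move=> m_lt; elim: j => [|j IH] /=; first by rewrite /qfall big_ord0 scale1r subn0.
rewrite IH (linear_funZ linear_x_act) x_act_upow; last exact: leq_ltn_trans (leq_subr j m) m_lt.
by rewrite scalerA /qfall big_ord_recr /= subnS.
Qed.

Lemma iter_g_act_order (y : rV) : iter n (g_act w) y = y.
Proof.
move: y; apply: linear_upow_ext => [||m m_lt]; first exact: linear_iter linear_g_act.
  by move=> c y y'.
by rewrite iter_g_act_upow // -exprM mulnC exprM w_order expr1n scale1r.
Qed.

Lemma iter_g_act_mod i (y : rV) : iter i (g_act w) y = iter (i %% n) (g_act w) y.
Proof.
rewrite {1}(divn_eq i n) iterD.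
by elim: (i %/ n)%N => //= q IH; rewrite mulSn iterD iter_g_act_order.
Qed.

Lemma iter_x_act_nilpotent j (y : rV) : (n <= j)%N -> iter j (x_act w) y = 0.
Proof.
move=> n_le; move: y; apply: linear_upow_ext => [||m m_lt].
- exact: linear_iter linear_x_act.
- by move=> c y y'; rewrite scaler0 addr0.
by rewrite iter_x_act_upow // qfall_eq0 ?scale0r //; apply: leq_trans m_lt n_le.
Qed.

Lemma x_g_act_comm (y : rV) : x_act w (g_act w y) = w *: g_act w (x_act w y).
Proof.
move: y; apply: linear_upow_ext => [||m m_lt].
- exact: linear_comp linear_x_act linear_g_act.
- exact: linear_scale_fun (linear_comp linear_g_act linear_x_act).
rewrite g_act_upow // (linear_funZ linear_x_act) x_act_upow // (linear_funZ linear_g_act).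
case: m m_lt => [|m] m_lt; first by rewrite /qint big_ord0 !(scale0r, scaler0).
by rewrite g_act_upow ?(ltnW m_lt) // !scalerA exprS; congr (_ *: _); ring.
Qed.

Lemma iter_x_g_act b (y : rV) :
  iter b (x_act w) (g_act w y) = w ^+ b *: g_act w (iter b (x_act w) y).
Proof.
elim: b => [|b IH] /=; first by rewrite scale1r.
by rewrite IH (linear_funZ linear_x_act) x_g_act_comm scalerA exprSr.
Qed.

Lemma iter_x_iter_g_act b c (y : rV) : iter b (x_act w) (iter c (g_act w) y) =
  w ^+ (b * c) *: iter c (g_act w) (iter b (x_act w) y).
Proof.
elim: c => [|c IH] /=; first by rewrite muln0 scale1r.
by rewrite iter_x_g_act IH (linear_funZ linear_g_act) scalerA -exprD mulnS.
Qed.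

Lemma linear_act h : linear (act w h : rV -> rV).
Proof.
apply: linear_sum_fun => i; apply: linear_sum_fun => j; apply: linear_scale_fun.
exact: linear_comp (linear_iter i linear_g_act) (linear_iter j linear_x_act).
Qed.

Lemma linear_act_l (y : rV) : linear (fun h : 'M[k]_n => act w h y).
Proof.
move=> c h h'; rewrite /act scaler_sumr -big_split; apply: eq_bigr => i _ /=.
rewrite scaler_sumr -big_split; apply: eq_bigr => j _ /=.
by rewrite !mxE scalerDl scalerA.
Qed.

Lemma act_hb i j (y : rV) :
  act w (hb k n i j) y = iter i (g_act w) (iter j (x_act w) y).
Proof.
have [j_lt | n_le] := ltnP j n; last first.
  have -> : hb k n i j = 0.
    apply/matrixP => a b; rewrite !mxE.
    by have /ltn_eqF -> : (b < j)%N := leq_trans (ltn_ord b) n_le; rewrite andbF.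
  rewrite iter_x_act_nilpotent //.
  by rewrite (linear_fun0 (linear_act_l y)) (linear_fun0 (linear_iter i linear_g_act)).
rewrite iter_g_act_mod /act (bigD1 (Ordinal (ltn_pmod i n_gt0))) //= (bigD1 (Ordinal j_lt)) //=.
rewrite !mxE !eqxx scale1r !big1 ?addr0 // => [a a_ne | b b_ne].
- by apply: big1 => b _; rewrite mxE (negPf (a_ne : (a : nat) != (i %% n)%N)) scale0r.
- by rewrite mxE (negPf (b_ne : (b : nat) != j)) andbF scale0r.
Qed.

Lemma act_hone (y : rV) : act w (hone k n) y = y.
Proof. exact: act_hb. Qed.

Lemma hmul_expand h h' : hmul w h h' = \sum_(a < n) \sum_(b < n) \sum_(c < n) \sum_(d < n)
  (h a b * h' c d * w ^+ (b * c)) *: hb k n (a + c) (b + d).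
Proof.
apply/matrixP => i j; rewrite mxE.
do 4 (rewrite summxE; apply: eq_bigr => ? _).
rewrite !mxE (eq_sym (i : nat)) (eq_sym (j : nat)).
by case: ifP; rewrite ?mulr1 ?mulr0.
Qed.

Lemma iter_gx_mul a b c d (y : rV) :
  iter a (g_act w) (iter b (x_act w) (iter c (g_act w) (iter d (x_act w) y))) =
  w ^+ (b * c) *: act w (hb k n (a + c) (b + d)) y.
Proof.
by rewrite act_hb !iterD iter_x_iter_g_act (linear_funZ (linear_iter a linear_g_act)).
Qed.

Lemma act_mul h h' (y : rV) : act w (hmul w h h') y = act w h (act w h' y).
Proof.
have gx_lin a b : linear (fun z : rV => iter a (g_act w) (iter b (x_act w) z)).
  exact: linear_comp (linear_iter a linear_g_act) (linear_iter b linear_x_act).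
rewrite hmul_expand {2}/act (linear_fun_sum (linear_act_l y)); apply: eq_bigr => a _.
rewrite (linear_fun_sum (linear_act_l y)); apply: eq_bigr => b _.
rewrite [act w h' y]/act (linear_fun_sum (gx_lin a b)) scaler_sumr.
rewrite (linear_fun_sum (linear_act_l y)); apply: eq_bigr => c _.
rewrite (linear_fun_sum (gx_lin a b)) scaler_sumr.
rewrite (linear_fun_sum (linear_act_l y)); apply: eq_bigr => d _.
rewrite (linear_funZ (linear_act_l y)) (linear_funZ (gx_lin a b)) iter_gx_mul.
by rewrite !scalerA.
Qed.

Lemma act_hpow h j (y : rV) : act w (hpow w h j) y = iter j (act w h) y.
Proof.
elim: j => [|j IH] /=; first exact: act_hone.
by rewrite act_mul IH.
Qed.

Lemma iter_act_hx j m : (m < n)%N ->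
  iter j (act w (hx k n)) (U m) = qfall m j *: U (m - j).
Proof.
move=> m_lt; rewrite -iter_x_act_upow //.
by apply: eq_iter => y; rewrite act_hb.
Qed.

Lemma iter_act_hginv j m : (m < n)%N ->
  iter j (act w (hginv k n)) (U m) = (w ^+ m) ^+ (n.-1 * j) *: U m.
Proof.
move=> m_lt; rewrite -iter_g_act_upow // mulnC iterM.
by apply: eq_iter => y; rewrite act_hb.
Qed.

Lemma tensE h s l : tens w h s l = U s 0 l *: h.
Proof. by rewrite ffunE mxE. Qed.

Lemma sum_act_tens h s (y : rV) :
  \sum_(l < n) Amul w (act w (tens w h s l) y) (U l) = Amul w (act w h y) (U s).
Proof.
rewrite (row_upow_decomp (U s)) (linear_fun_sum (linear_Amul _)); apply: eq_bigr => l _.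
rewrite tensE (linear_funZ (linear_act_l y)) (linear_funZ (linear_Amul_l _)).
by rewrite (linear_funZ (linear_Amul _)).
Qed.

Lemma sum_act_HAmul T T' (y : rV) :
  \sum_(l < n) Amul w (act w (HAmul w T T' l) y) (U l) =
  \sum_(p < n) \sum_(q < n) Amul w (act w (hmul w (T p) (T' q)) y) (U (p + q)).
Proof.
transitivity (\sum_(l < n) \sum_(p < n) \sum_(q < n)
    Amul w (act w (tens w (hmul w (T p) (T' q)) (p + q) l) y) (U l)).
  apply: eq_bigr => l _.
  rewrite sum_ffunE (linear_fun_sum (linear_act_l y)) (linear_fun_sum (linear_Amul_l _)).
  apply: eq_bigr => p _.
  by rewrite sum_ffunE (linear_fun_sum (linear_act_l y)) (linear_fun_sum (linear_Amul_l _)).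
rewrite exchange_big; apply: eq_bigr => p _.
by rewrite exchange_big; apply: eq_bigr => q _; apply: sum_act_tens.
Qed.

Definition qpoch (m N : nat) : k := \prod_(t < N) (w ^+ (m - t) - 1).

Lemma qfall_qpoch m i : (w - 1) ^+ i * qfall m i = qpoch m i.
Proof.
elim: i => [|i IH]; first by rewrite /qfall /qpoch !big_ord0 mulr1.
rewrite /qfall /qpoch !big_ord_recr /= -/(qfall m i) -/(qpoch m i) -IH subrX1 exprSr.
by rewrite /qint; ring.
Qed.

Lemma qpoch_eq0 m N : (m < N)%N -> qpoch m N = 0.
Proof.
by move=> m_lt; rewrite /qpoch (bigD1 (Ordinal m_lt)) //= subnn expr0 subrr mul0r.
Qed.

Lemma half_mulS N : ((N * N.+1) %/ 2 = (N * N.-1) %/ 2 + N)%N.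
Proof.
case: N => [|N] //=.
have -> : (N.+1 * N.+2 = N.+1 * 2 + N.+1 * N)%N by ring.
by rewrite divnMDl // addnC.
Qed.

(* [(w ^+ m) ^+ n.-1] stands for [w^(-m)], coming from [g^(-1) = g^(n-1)]. *)
Lemma coef_a_partial_sum m N : (m < n)%N ->
  \sum_(i < N) coef_a w i * ((w ^+ m) ^+ (n.-1 * i.+1) * qfall m i) =
  1 - qpoch m N * w ^+ ((N * N.-1) %/ 2 + m * (n.-1 * N)).
Proof.
move=> m_lt; elim: N => [|N IH].
  by rewrite big_ord0 /qpoch big_ord0 mul0n div0n !muln0 expr0 mulr1 subrr.
have qpochS : qpoch m N.+1 = qpoch m N * (w ^+ (m - N) - 1).
  by rewrite /qpoch big_ord_recr.
have term : coef_a w N * ((w ^+ m) ^+ (n.-1 * N.+1) * qfall m N) =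
    qpoch m N * w ^+ ((N.+1 * N) %/ 2 + m * (n.-1 * N.+1)).
  by rewrite /coef_a -qfall_qpoch exprD [w ^+ (m * _)]exprM (mulnC N.+1 N); ring.
rewrite big_ord_recr /= IH term qpochS.
have [N_gt | N_le] := ltnP m N; first by rewrite qpoch_eq0 // !mul0r addr0.
have -> : w ^+ ((N * N.-1) %/ 2 + m * (n.-1 * N)) =
    w ^+ (m - N) * w ^+ ((N.+1 * N) %/ 2 + m * (n.-1 * N.+1)).
  rewrite -exprD.
  have -> : (m - N + ((N.+1 * N) %/ 2 + m * (n.-1 * N.+1)) =
      (N * N.-1) %/ 2 + m * (n.-1 * N) + n * m)%N.
    rewrite mulnC half_mulS; have n_eq : n = n.-1.+1 by lia.
    rewrite {3}n_eq; nia.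
  by rewrite [RHS]exprD [w ^+ (n * m)]exprM w_order expr1n mulr1.
by ring.
Qed.

Lemma coef_a_sum m : (m < n)%N ->
  \sum_(i < n) coef_a w i * ((w ^+ m) ^+ (n.-1 * i.+1) * qfall m i) = 1.
Proof. by move=> m_lt; rewrite coef_a_partial_sum // qpoch_eq0 // mul0r subr0. Qed.

Lemma act_rho_u_coord i m : (m < n)%N ->
  Amul w (act w (coef_a w i *: hmul w (hpow w (hx k n) i) (hpow w (hginv k n) i.+1)) (U m))
    (U i.+1) = (coef_a w i * ((w ^+ m) ^+ (n.-1 * i.+1) * qfall m i)) *: U m.+1.
Proof.
move=> m_lt; rewrite (linear_funZ (linear_act_l _)) (linear_funZ (linear_Amul_l _)).
rewrite act_mul !act_hpow iter_act_hginv // (linear_funZ (linear_iter _ (linear_act _))).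
rewrite iter_act_hx // !(linear_funZ (linear_Amul_l _)) upowM !scalerA.
have [i_le | m_lt_i] := leqP i m; last by rewrite qfall_eq0 // !(mulr0, scale0r).
by rewrite -addSnnS addSn subnK // mulrA.
Qed.

Lemma rho_u_braided (y : rV) :
  Amul w (U 1) y = \sum_(t < n) Amul w (act w (rho_u n w t) y) (U t).
Proof.
symmetry; move: y; apply: linear_upow_ext => [||m m_lt].
- apply: (linear_sum_fun (f := fun t y => Amul w (act w (rho_u n w t) y) (U t))) => t.
  exact: linear_comp (linear_Amul_l _) (linear_act _).
- exact: linear_Amul.
rewrite /rho_u; under eq_bigr => t _ do
  rewrite sum_ffunE (linear_fun_sum (linear_act_l _)) (linear_fun_sum (linear_Amul_l _)).
rewrite exchange_big /=.
under eq_bigr => i _ do rewrite sum_act_tens act_rho_u_coord //.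
by rewrite -scaler_suml coef_a_sum // scale1r upowM add1n.
Qed.

Lemma upow_braided p (y : rV) :
  Amul w (U p) y = \sum_(l < n) Amul w (act w (rho_upow n w p l) y) (U l).
Proof.
elim: p y => [|p IH] y; first by rewrite sum_act_tens act_hone AmulC.
rewrite [rho_upow n w p.+1]/rho_upow iterS -/(rho_upow n w p) sum_act_HAmul exchange_big.
transitivity (\sum_(t < n) Amul w (U p) (Amul w (act w (rho_u n w t) y) (U t))).
  by rewrite -(linear_fun_sum (linear_Amul (U p))) -rho_u_braided -AmulA upowM addn1.
apply: eq_bigr => t _; rewrite -AmulA IH (linear_fun_sum (linear_Amul_l _)).
by apply: eq_bigr => s _; rewrite act_mul AmulA upowM.
Qed.

Lemma linear_rho_at l : linear (fun a : rV => rho w a l).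
Proof. by move=> c a a'; rewrite /rho linear_coord !ffunE. Qed.

Lemma Taft_YD_commutative : YD_commutative n w.
Proof.
move=> a b; move: a; apply: linear_upow_ext => [||p p_lt].
- exact: linear_Amul_l.
- apply: (linear_sum_fun (f := fun l a => Amul w (act w (rho w a l) b) (U l))) => l.
  exact: linear_comp (linear_Amul_l _) (linear_comp (linear_act_l b) (linear_rho_at l)).
by rewrite upow_braided /rho sum_upow_coord.
Qed.

End YetterDrinfeldCommutativity.

Theorem corollary5p6 (k : fieldType) (n : nat) (w : k)
  (hchar : [pchar k] =i pred0) (hn : (1 < n)%N) (hw : n.-primitive_root w) :
  YD_commutative n w.
Proof.
exact: Taft_YD_commutative (ltnW hn) (prim_expr_order hw).
Qed.
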